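(* Let $g\in\mathcal{P}(\mathbb{R})$, $\beta,\sigma>0$ and $\gamma:=\beta+\sigma^2/2$. There is a constant $C(\beta,\sigma)$ such that for all $z\in\mathbb{C}$ with $\Re(z)\in[0,\beta]$, $$|P(z)|+|P'(z)|\le\Big(1+\int_{\mathbb{R}}\omega^2g(\mathrm{d}\omega)\Big)\frac{C(\beta,\sigma)}{|\Im(z)|^2}.$$
   Context: For $z\in\mathbb{C}$ with $\Re(z)\in(-\sigma^2/2,\gamma)$, $P(z):=\int_{\mathbb{R}}\frac{g(\mathrm{d}\omega)}{(\gamma+i\omega-z)(\frac{\sigma^2}{2}+z-i\omega)}$ (a holomorphic function on this strip), and $P'$ denotes its complex derivative. *)

From HB Require Import structures.
From mathcomp Require Import all_boot all_order all_algebra.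
From mathcomp Require Import all_classical all_reals all_analysis.
From mathcomp Require Import complex.
Set Implicit Arguments. Unset Strict Implicit. Unset Printing Implicit Defensive.
Import Order.TTheory GRing.Theory Num.Theory.
Import numFieldNormedType.Exports.
Local Open Scope ring_scope.
Local Open Scope complex_scope.

Definition Pintegrand (R : realType) (beta sigma : R) (z : R[i]) (w : R) : R[i] :=
  let gamma := beta + sigma ^+ 2 / 2 in
  ((gamma%:C + 'i * w%:C - z) * ((sigma ^+ 2 / 2)%:C + z - 'i * w%:C))^-1.

Definition Pstrip (R : realType) (g : probability R R) (beta sigma : R)
    (z : R[i]) : R[i] :=
  (\int[g]_w complex.Re (Pintegrand beta sigma z w))%:C
  + 'i * (\int[g]_w complex.Im (Pintegrand beta sigma z w))%:C.

Definition Pstrip_deriv (R : realType) (g : probability R R) (beta sigma : R)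
    (z : R[i]) : R[i] :=
  @derive1 (R[i] : numFieldType) (R[i] : numFieldType)^o (Pstrip g beta sigma) z.

From HB Require Import structures.
From mathcomp Require Import all_boot all_order all_algebra.
From mathcomp Require Import all_classical all_reals all_analysis.
From mathcomp Require Import complex.
Import Order.TTheory GRing.Theory Num.Theory.
Import numFieldNormedType.Exports.
Local Open Scope ring_scope.
From mathcomp Require Import measurable_realfun ring lra.
Set Implicit Arguments. Unset Strict Implicit. Unset Printing Implicit Defensive.

(* Write the integrand of P as 1/(A B) with A := gamma + i w - z and
   B := sigma^2/2 + z - i w, so that its z-derivative is (B - A)/(A B)^2.
   For 0 <= Re z <= beta both Re A and Re B are at least s := sigma^2/2,
   while |Im A| = |Im B| = |w - Im z|.  Hence |A B| >= max(s^2, (w - Im z)^2),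
   and since (Im z)^2 <= 2 (w - Im z)^2 + 2 w^2 this gives
   1/|A B| <= (2 + 2/s^2) (1 + w^2) / (Im z)^2, while the derivative of the
   integrand is at most 2/s times 1/|A B|; integrating against g gives the bound.
   Differentiation under the integral sign is justified directly: for
   |h| <= s/2 the second-order Taylor remainder of 1/(A B) in z is at most
   24 |h|^2 / s^4, uniformly in w. *)

Local Notation normc := ComplexField.Normc.normc.

Section ComplexNorms.
Variable R : rcfType.
Implicit Type u : R[i].

Definition norm1c u : R := `|complex.Re u| + `|complex.Im u|.

Lemma normc_ge0 u : 0 <= normc u.
Proof. by case: u => a b; rewrite /= sqrtr_ge0. Qed.

Lemma absRe_le_normc u : `|complex.Re u| <= normc u.
Proof.
case: u => a b /=; rewrite -sqrtr_sqr ler_sqrt ?addr_ge0 ?sqr_ge0 //.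
by rewrite lerDl sqr_ge0.
Qed.

Lemma absIm_le_normc u : `|complex.Im u| <= normc u.
Proof.
case: u => a b /=; rewrite -sqrtr_sqr ler_sqrt ?addr_ge0 ?sqr_ge0 //.
by rewrite lerDr sqr_ge0.
Qed.

Lemma norm1c_ge0 u : 0 <= norm1c u.
Proof. by rewrite addr_ge0. Qed.

Lemma normc_le_norm1c u : normc u <= norm1c u.
Proof.
case: u => a b; rewrite /norm1c /=.
have -> : `|a| + `|b| = Num.sqrt ((`|a| + `|b|) ^+ 2).
  by rewrite sqrtr_sqr (ger0_norm (addr_ge0 _ _)).
rewrite ler_sqrt ?sqr_ge0 // sqrrD !real_normK ?num_real //.
by rewrite -addrA lerD2l lerDr mulrn_wge0 // mulr_ge0.
Qed.

Lemma norm1c_le_normc u : norm1c u <= 2 * normc u.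
Proof. by rewrite mulr2n mulrDl mul1r lerD ?absRe_le_normc ?absIm_le_normc. Qed.

Lemma normC_normc u : `|u| = (normc u)%:C%C.
Proof. by rewrite normc_def; case: u. Qed.

Lemma normc_lb_neq0 r u : 0 < r -> r <= normc u -> u != 0.
Proof.
move=> r0 ru; apply: contraTneq ru => ->.
by rewrite ComplexField.Normc.normc0 -ltNge.
Qed.

End ComplexNorms.

Section ComponentwiseContinuity.
Variable R : realType.
Local Open Scope complex_scope.
Implicit Types F G : R -> R[i].

(* [R[i]] is normed only over itself, so continuity of complex-valued functions of a
   real variable is imposed on their real and imaginary parts. *)
Definition ccontinuous F :=
  continuous (fun w => complex.Re (F w)) /\ continuous (fun w => complex.Im (F w)).

Lemma ccontinuous_cst (c : R[i]) : ccontinuous (fun=> c).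
Proof. by split => w; apply: cvg_cst. Qed.

Lemma ccontinuous_real : ccontinuous (fun w => w%:C).
Proof. by split => w /=; [apply: cvg_id | apply: cvg_cst]. Qed.

Lemma ccontinuousD F G : ccontinuous F -> ccontinuous G ->
  ccontinuous (fun w => F w + G w).
Proof.
move=> [F1 F2] [G1 G2]; split => w.
- have -> : (fun w => complex.Re (F w + G w)) =
      (fun w => complex.Re (F w) + complex.Re (G w)) by apply/funext => x; rewrite raddfD.
  by apply: cvgD; [exact: F1|exact: G1].
- have -> : (fun w => complex.Im (F w + G w)) =
      (fun w => complex.Im (F w) + complex.Im (G w)) by apply/funext => x; rewrite raddfD.
  by apply: cvgD; [exact: F2|exact: G2].
Qed.

Lemma ccontinuousN F : ccontinuous F -> ccontinuous (fun w => - F w).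
Proof.
move=> [F1 F2]; split => w.
- have -> : (fun w => complex.Re (- F w)) = (fun w => - complex.Re (F w)).
    by apply/funext => x; rewrite raddfN.
  by apply: cvgN; exact: F1.
- have -> : (fun w => complex.Im (- F w)) = (fun w => - complex.Im (F w)).
    by apply/funext => x; rewrite raddfN.
  by apply: cvgN; exact: F2.
Qed.

Lemma ccontinuousB F G : ccontinuous F -> ccontinuous G ->
  ccontinuous (fun w => F w - G w).
Proof. by move=> cF cG; apply: ccontinuousD => //; apply: ccontinuousN. Qed.

Lemma ccontinuousM F G : ccontinuous F -> ccontinuous G ->
  ccontinuous (fun w => F w * G w).
Proof.
move=> [F1 F2] [G1 G2]; split => w.
- have -> : (fun w => complex.Re (F w * G w)) =
      (fun w => complex.Re (F w) * complex.Re (G w) - complex.Im (F w) * complex.Im (G w)).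
    by apply/funext => x; case: (F x) => ? ?; case: (G x).
  by apply: cvgB; apply: cvgM; [exact: F1|exact: G1|exact: F2|exact: G2].
- have -> : (fun w => complex.Im (F w * G w)) =
      (fun w => complex.Re (F w) * complex.Im (G w) + complex.Im (F w) * complex.Re (G w)).
    by apply/funext => x; case: (F x) => ? ?; case: (G x).
  by apply: cvgD; apply: cvgM; [exact: F1|exact: G2|exact: F2|exact: G1].
Qed.

Lemma ccontinuousV F : ccontinuous F -> (forall w, F w != 0) ->
  ccontinuous (fun w => (F w)^-1).
Proof.
move=> [F1 F2] F0.
pose N w := complex.Re (F w) ^+ 2 + complex.Im (F w) ^+ 2.
have N0 w : N w != 0.
  apply: contra (F0 w); rewrite /N paddr_eq0 ?sqr_ge0 // !sqrf_eq0.
  by case: (F w) => a b /= /andP[/eqP-> /eqP->].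
have cN : continuous N.
  by move=> w; apply: cvgD; rewrite expr2; apply: cvgM; [exact: F1|exact: F1|exact: F2|exact: F2].
split => w.
- have -> : (fun w => complex.Re (F w)^-1) = (fun w => complex.Re (F w) * (N w)^-1).
    by apply/funext => x; rewrite /N; case: (F x).
  by apply: cvgM; [exact: F1|apply: cvgV; [exact: N0|exact: cN]].
- have -> : (fun w => complex.Im (F w)^-1) = (fun w => - (complex.Im (F w) * (N w)^-1)).
    by apply/funext => x; rewrite /N; case: (F x).
  by apply: cvgN; apply: cvgM; [exact: F2|apply: cvgV; [exact: N0|exact: cN]].
Qed.

Lemma continuous_norm1c F : ccontinuous F -> continuous (fun w => norm1c (F w)).
Proof. by move=> [F1 F2] w; apply: cvgD; apply: cvg_norm; [exact: F1|exact: F2]. Qed.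

Lemma measurable_norm1c F : ccontinuous F -> measurable_fun setT (fun w => norm1c (F w)).
Proof. by move=> cF; apply: continuous_measurable_fun; exact: continuous_norm1c. Qed.

End ComponentwiseContinuity.

Section ComplexIntegral.
Variables (R : realType) (g : probability R R).
Local Open Scope complex_scope.
Implicit Types F G : R -> R[i].

Definition cintegral F : R[i] :=
  (\int[g]_w complex.Re (F w))%:C + 'i * (\int[g]_w complex.Im (F w))%:C.

Lemma cintegralE F :
  cintegral F = Complex (\int[g]_w complex.Re (F w)) (\int[g]_w complex.Im (F w)).
Proof. by rewrite [RHS]complexE. Qed.

Definition bounded_ccontinuous F := ccontinuous F /\ exists M, forall w, normc (F w) <= M.

Lemma integrable_bounded_continuous (f : R -> R) (M : R) :
  continuous f -> (forall w, `|f w| <= M) -> g.-integrable setT (EFin \o f).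
Proof.
move=> cf fM; apply: measurable_bounded_integrable => //.
- exact: (le_lt_trans (probability_le1 g measurableT) (ltry 1)).
- exact: continuous_measurable_fun.
apply/ex_bound; first exact: (@globally_properfilter _ _ 0).
by exists M => w _; apply: fM.
Qed.

Lemma integrable_Re F : bounded_ccontinuous F ->
  g.-integrable setT (EFin \o (fun w => complex.Re (F w))).
Proof.
move=> [[cRe _] [M hM]]; apply: (integrable_bounded_continuous (M := M)) => // w.
exact: le_trans (absRe_le_normc _) (hM w).
Qed.

Lemma integrable_Im F : bounded_ccontinuous F ->
  g.-integrable setT (EFin \o (fun w => complex.Im (F w))).
Proof.
move=> [[_ cIm] [M hM]]; apply: (integrable_bounded_continuous (M := M)) => // w.
exact: le_trans (absIm_le_normc _) (hM w).
Qed.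

Lemma integrable_norm1c F : bounded_ccontinuous F ->
  g.-integrable setT (EFin \o (fun w => norm1c (F w))).
Proof.
move=> [cF [M hM]].
apply: (integrable_bounded_continuous (M := 2 * M)); first exact: continuous_norm1c.
move=> w; rewrite ger0_norm ?norm1c_ge0 //; apply: le_trans (norm1c_le_normc _) _.
by rewrite ler_pM2l.
Qed.

Lemma bounded_ccontinuousB F G : bounded_ccontinuous F -> bounded_ccontinuous G ->
  bounded_ccontinuous (fun w => F w - G w).
Proof.
move=> [cF [M hM]] [cG [N hN]]; split; first exact: ccontinuousB.
by exists (M + N) => w; apply: le_trans (le_normcD _ _) _; rewrite normcN lerD.
Qed.

Lemma bounded_ccontinuousMl c F : bounded_ccontinuous F ->
  bounded_ccontinuous (fun w => c * F w).
Proof.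
move=> [cF [M hM]]; split; first exact: ccontinuousM (ccontinuous_cst _) cF.
exists (normc c * M) => w; rewrite ComplexField.Normc.normcM.
by rewrite ler_wpM2l ?normc_ge0.
Qed.

Lemma cintegralB F G : bounded_ccontinuous F -> bounded_ccontinuous G ->
  cintegral (fun w => F w - G w) = cintegral F - cintegral G.
Proof.
move=> bF bG; rewrite /cintegral.
under eq_Rintegral do rewrite raddfB.
under [X in _ + 'i * X%:C]eq_Rintegral do rewrite raddfB.
rewrite !RintegralB //; try exact: integrable_Re; try exact: integrable_Im.
by rewrite !rmorphB /=; ring.
Qed.

Lemma cintegralMl c F : bounded_ccontinuous F ->
  cintegral (fun w => c * F w) = c * cintegral F.
Proof.
move=> bF; have iRe := integrable_Re bF; have iIm := integrable_Im bF.
have iZ k (f : R -> R) : g.-integrable setT (EFin \o f) ->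
    g.-integrable setT (EFin \o (fun w => k * f w)).
  move=> fi; rewrite (_ : _ \o _ = (fun w => k%:E * (EFin \o f) w)%E).
    exact: integrableZl.
  by apply/funext => w; rewrite /= EFinM.
rewrite !cintegralE; case: c => a b.
have -> : (fun w => complex.Re ((a +i* b) * F w)) =
    (fun w => a * complex.Re (F w) - b * complex.Im (F w)).
  by apply/funext => w; case: (F w).
have -> : (fun w => complex.Im ((a +i* b) * F w)) =
    (fun w => a * complex.Im (F w) + b * complex.Re (F w)).
  by apply/funext => w; case: (F w).
by rewrite RintegralB ?RintegralD ?iZ // !RintegralZl.
Qed.

Lemma normc_cintegral_le_Rintegral F : bounded_ccontinuous F ->
  normc (cintegral F) <= \int[g]_w norm1c (F w).
Proof.
move=> bF; rewrite cintegralE; apply: le_trans (normc_le_norm1c _) _.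
rewrite /norm1c /= RintegralD //; try exact: integrable_norm (integrable_Re bF);
  try exact: integrable_norm (integrable_Im bF).
by apply: lerD; apply: le_normr_Rintegral => //; [exact: integrable_Re|exact: integrable_Im].
Qed.

Lemma normc_cintegral_le_integral F : bounded_ccontinuous F ->
  ((normc (cintegral F))%:E <= \int[g]_w (norm1c (F w))%:E)%E.
Proof.
move=> bF; rewrite -[X in (_ <= X)%E]fineK ?lee_fin ?normc_cintegral_le_Rintegral //.
exact: integrable_fin_num (integrable_norm1c bF).
Qed.

Lemma normc_cintegral_le F M : bounded_ccontinuous F ->
  (forall w, normc (F w) <= M) -> normc (cintegral F) <= 2 * M.
Proof.
move=> bF hM; apply: le_trans (normc_cintegral_le_Rintegral bF) _.
have icst : g.-integrable setT (EFin \o (fun=> 2 * M)).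
  by apply: (integrable_bounded_continuous (M := `|2 * M|)) => // w; exact: cvg_cst.
apply: le_trans (le_Rintegral _ (integrable_norm1c bF) icst _) _ => //.
  by move=> w _; apply: le_trans (norm1c_le_normc _) _; rewrite ler_pM2l.
by rewrite Rintegral_cst //= probability_setT mulr1.
Qed.

End ComplexIntegral.

Lemma integral_le_second_moment (R : realType) (g : probability R R) (f : R -> R) (K : R) :
  measurable_fun setT f -> (forall w, 0 <= f w <= K * (1 + w ^+ 2)) ->
  (\int[g]_w (f w)%:E <= (1 + \int[g]_w (w ^+ 2)%:E) * K%:E)%E.
Proof.
move=> mf hf.
have K0 : 0 <= K by case/andP: (hf 0) => /le_trans/[apply]; rewrite expr0n addr0 mulr1.
have msq : measurable_fun setT (fun w : R => w ^+ 2) by exact: exprn_measurable.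
apply: (@le_trans _ _ (\int[g]_w (K%:E * (1 + w ^+ 2)%:E))%E).
  apply: ge0_le_integral => //.
  - by move=> w _; rewrite lee_fin; case/andP: (hf w).
  - by apply/measurable_EFinP.
  - by apply: emeasurable_funM => //; apply/measurable_EFinP; exact: measurable_funD.
  - by move=> w _; rewrite -EFinM lee_fin; case/andP: (hf w).
rewrite ge0_integralZl_EFin //; last 2 first.
- by move=> w _; rewrite lee_fin addr_ge0 ?sqr_ge0.
- by apply/measurable_EFinP; exact: measurable_funD.
under eq_integral do rewrite EFinD.
rewrite ge0_integralD //; last 2 first.
- by move=> w _; rewrite lee_fin sqr_ge0.
- exact/measurable_EFinP.
rewrite integral_cst //; set m := (X in (1 * X)%E).
have -> : m = 1%E by exact: probability_setT.
by rewrite mule1 muleC.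
Qed.

Lemma derive1_eq_of_quotient_bound (K : numFieldType) (F : K -> K^o) (z L r c : K) :
  0 < r -> 0 < c ->
  (forall h, h != 0 -> `|h| <= r -> `|h^-1 *: (F (h + z) - F z) - L| <= c * `|h|) ->
  derive1 F z = L.
Proof.
move=> r0 c0 hF; apply: cvg_lim => //.
apply/cvgrPdist_le => e e0; near=> h.
rewrite distrC; apply: le_trans (hF h _ _) _.
- by near: h; exact: nbhs_dnbhs_neq.
- by near: h; exact: dnbhs0_le.
- rewrite mulrC -ler_pdivlMr //; near: h; apply: dnbhs0_le; exact: divr_gt0.
Unshelve. all: by end_near.
Qed.

Section RealBounds.
Variable R : realFieldType.
Implicit Types r a b : R.

Lemma invM_le_inv_sqr r a b : 0 < r -> r <= a -> r <= b -> (a * b)^-1 <= (r ^+ 2)^-1.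
Proof.
move=> r0 ra rb; rewrite lef_pV2 ?posrE ?exprn_gt0 ?mulr_gt0 ?(lt_le_trans r0) //.
by rewrite expr2 ler_pM // ltW.
Qed.

Lemma addr_div_sqrM_le r a b : 0 < r -> r <= a -> r <= b ->
  (a + b) / (a * b) ^+ 2 <= 2 / r * (a * b)^-1.
Proof.
move=> r0 ra rb; have a0 := lt_le_trans r0 ra; have b0 := lt_le_trans r0 rb.
have -> : (a + b) / (a * b) ^+ 2 = (a^-1 + b^-1) * (a * b)^-1.
  by field; rewrite !gt_eqF.
apply: ler_wpM2r; first by rewrite invr_ge0 mulr_ge0 // ltW.
by rewrite -[2]/(1 + 1) mulrDl mul1r lerD // lef_pV2.
Qed.

Lemma remainder_weight_le r a b t : 0 < r -> r <= a -> r <= b -> 0 <= t -> t <= r / 2 ->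
  (a * b + (a + b) * (a + b + t)) / (a * b) ^+ 2 <= 6 / r ^+ 2.
Proof.
move=> r0 ra rb t0 tr.
have ab0 : 0 < a * b by rewrite mulr_gt0 // (lt_le_trans r0).
rewrite ler_pdivrMr ?exprn_gt0 // mulrAC ler_pdivlMr ?exprn_gt0 // mulrC.
have a0 : 0 <= a by rewrite (le_trans _ ra) // ltW.
have b0 : 0 <= b by rewrite (le_trans _ rb) // ltW.
have r2ab : r ^+ 2 <= a * b by rewrite expr2 ler_pM // ltW.
have r2a : r ^+ 2 <= a ^+ 2 by rewrite !expr2 ler_pM // ltW.
have r2b : r ^+ 2 <= b ^+ 2 by rewrite !expr2 ler_pM // ltW.
have h1 : r ^+ 2 * (a * b) <= (a * b) ^+ 2.
  by rewrite [X in _ <= X]expr2 ler_wpM2r // mulr_ge0.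
have h2 : r ^+ 2 * a ^+ 2 <= (a * b) ^+ 2 by rewrite exprMn mulrC ler_wpM2l // sqr_ge0.
have h3 : r ^+ 2 * b ^+ 2 <= (a * b) ^+ 2 by rewrite exprMn ler_wpM2r // sqr_ge0.
have h4 : r ^+ 2 * (a * t) <= (a * b) ^+ 2 / 2.
  have -> : (a * b) ^+ 2 / 2 = b ^+ 2 * (a * (a / 2)) by ring.
  by apply: ler_pM; rewrite ?sqr_ge0 ?mulr_ge0 // ler_wpM2l //; lra.
have h5 : r ^+ 2 * (b * t) <= (a * b) ^+ 2 / 2.
  have -> : (a * b) ^+ 2 / 2 = a ^+ 2 * (b * (b / 2)) by ring.
  by apply: ler_pM; rewrite ?sqr_ge0 ?mulr_ge0 // ler_wpM2l //; lra.
have -> : r ^+ 2 * (a * b + (a + b) * (a + b + t)) =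
    3 * (r ^+ 2 * (a * b)) + r ^+ 2 * a ^+ 2 + r ^+ 2 * b ^+ 2
    + r ^+ 2 * (a * t) + r ^+ 2 * (b * t) by ring.
lra.
Qed.

Lemma remainder_ratio_le r a b a' b' t : 0 < r -> r <= a -> r <= b ->
  r / 2 <= a' -> r / 2 <= b' -> 0 <= t -> t <= r / 2 ->
  t ^+ 2 * (a * b + (a + b) * (a + b + t)) / ((a * b) ^+ 2 * (a' * b'))
  <= t ^+ 2 * (24 / r ^+ 4).
Proof.
move=> r0 ra rb ra' rb' t0 tr.
have r20 : 0 < r / 2 by rewrite divr_gt0.
have a0 := lt_le_trans r0 ra; have b0 := lt_le_trans r0 rb.
rewrite -mulrA ler_wpM2l ?sqr_ge0 // invfM mulrA.
have -> : 24 / r ^+ 4 = 6 / r ^+ 2 * ((r / 2) ^+ 2)^-1 by field; rewrite gt_eqF.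
apply: ler_pM.
- by rewrite divr_ge0 ?sqr_ge0 // addr_ge0 ?mulr_ge0 ?addr_ge0 // ltW.
- by rewrite invr_ge0 mulr_ge0 // ltW // (lt_le_trans r20).
- exact: remainder_weight_le.
- exact: invM_le_inv_sqr.
Qed.

Lemma invM_le_weight r a b w y : 0 < r -> r <= a -> r <= b ->
  `|w - y| <= a -> `|w - y| <= b -> y != 0 ->
  (a * b)^-1 <= (2 + 2 / r ^+ 2) * (1 + w ^+ 2) / y ^+ 2.
Proof.
move=> r0 ra rb wa wb y0.
have ab0 : 0 < a * b by rewrite mulr_gt0 // (lt_le_trans r0).
have y20 : 0 < y ^+ 2 by rewrite exprn_even_gt0.
rewrite ler_pdivlMr // mulrC ler_pdivrMr //.
have hwy : (w - y) ^+ 2 <= a * b.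
  by rewrite -real_normK ?num_real // expr2 ler_pM.
have hr : r ^+ 2 <= a * b by rewrite expr2 ler_pM // ltW.
have -> : (2 + 2 / r ^+ 2) * (1 + w ^+ 2) * (a * b) =
    2 * (a * b) * (1 + w ^+ 2) + 2 * w ^+ 2 * (a * b / r ^+ 2) + 2 / r ^+ 2 * (a * b).
  by field; rewrite gt_eqF ?exprn_gt0.
have h1 : w ^+ 2 <= w ^+ 2 * (a * b / r ^+ 2).
  by rewrite ler_peMr ?sqr_ge0 // ler_pdivlMr ?exprn_gt0 // mul1r.
have h2 : 0 <= a * b * w ^+ 2 by rewrite mulr_ge0 ?sqr_ge0 // ltW.
have h3 : 0 <= 2 / r ^+ 2 * (a * b) by rewrite mulr_ge0 ?divr_ge0 ?sqr_ge0 // ltW.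
(* y^2 <= 2 (w - y)^2 + 2 w^2, the difference being (2 w - y)^2 *)
have h4 : 0 <= (2 * w - y) ^+ 2 by rewrite sqr_ge0.
nra.
Qed.

End RealBounds.

Section Integrand.
Variables (R : realType) (beta sigma : R).
Local Open Scope complex_scope.
Local Notation s := (sigma ^+ 2 / 2).
Local Notation gamma := (beta + sigma ^+ 2 / 2).

Definition denA (z : R[i]) (w : R) : R[i] := gamma%:C + 'i * w%:C - z.
Definition denB (z : R[i]) (w : R) : R[i] := s%:C + z - 'i * w%:C.

Definition Pintegrand_deriv z w := (denB z w - denA z w) / (denA z w * denB z w) ^+ 2.

Lemma PintegrandE z w : Pintegrand beta sigma z w = (denA z w * denB z w)^-1.
Proof. by []. Qed.

Definition well_inside (r : R) (z : R[i]) :=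
  [/\ 0 < r, r <= gamma - complex.Re z & r <= s + complex.Re z].

Lemma well_inside_strip z : 0 < sigma -> 0 <= complex.Re z <= beta -> well_inside s z.
Proof.
move=> sigma0 /andP[z0 zb]; split; first by rewrite divr_gt0 ?exprn_gt0.
- by rewrite addrAC lerDr subr_ge0.
- by rewrite lerDl.
Qed.

Lemma well_inside_shift r z h : well_inside r z -> normc h <= r / 2 ->
  well_inside (r / 2) (h + z).
Proof.
move=> [r0 rA rB] hr; have := le_trans (absRe_le_normc h) hr.
rewrite ler_norml => /andP[h1 h2].
have ReD : complex.Re (h + z) = complex.Re h + complex.Re z by rewrite raddfD.
by split; rewrite ?ReD ?divr_gt0 //; lra.
Qed.

Lemma Re_denA z w : complex.Re (denA z w) = gamma - complex.Re z.
Proof. by case: z => x y; rewrite /denA /=; ring. Qed.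

Lemma Im_denA z w : complex.Im (denA z w) = w - complex.Im z.
Proof. by case: z => x y; rewrite /denA /=; ring. Qed.

Lemma Re_denB z w : complex.Re (denB z w) = s + complex.Re z.
Proof. by case: z => x y; rewrite /denB /=; ring. Qed.

Lemma Im_denB z w : complex.Im (denB z w) = complex.Im z - w.
Proof. by case: z => x y; rewrite /denB /=; ring. Qed.

Lemma denA_shift h z w : denA (h + z) w = denA z w - h.
Proof. by rewrite /denA; ring. Qed.

Lemma denB_shift h z w : denB (h + z) w = denB z w + h.
Proof. by rewrite /denB; ring. Qed.

Lemma normc_denA_ge r z w : well_inside r z -> r <= normc (denA z w).
Proof.
move=> [r0 rA _]; apply: le_trans (absRe_le_normc _).
by rewrite Re_denA ger0_norm // (le_trans _ rA) // ltW.
Qed.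

Lemma normc_denB_ge r z w : well_inside r z -> r <= normc (denB z w).
Proof.
move=> [r0 _ rB]; apply: le_trans (absRe_le_normc _).
by rewrite Re_denB ger0_norm // (le_trans _ rB) // ltW.
Qed.

Lemma normc_denA_ge_Im z w : `|w - complex.Im z| <= normc (denA z w).
Proof. by rewrite -Im_denA absIm_le_normc. Qed.

Lemma normc_denB_ge_Im z w : `|w - complex.Im z| <= normc (denB z w).
Proof. by rewrite distrC -Im_denB absIm_le_normc. Qed.

Lemma ccontinuous_denA z : ccontinuous (denA z).
Proof.
apply: ccontinuousB (ccontinuous_cst _); apply: ccontinuousD (ccontinuous_cst _) _.
apply: ccontinuousM; [exact: ccontinuous_cst|exact: ccontinuous_real].
Qed.

Lemma ccontinuous_denB z : ccontinuous (denB z).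
Proof.
apply: ccontinuousB (ccontinuous_cst _) _.
apply: ccontinuousM; [exact: ccontinuous_cst|exact: ccontinuous_real].
Qed.

Lemma normc_Pintegrand z w :
  normc (Pintegrand beta sigma z w) = (normc (denA z w) * normc (denB z w))^-1.
Proof. by rewrite PintegrandE ComplexField.Normc.normcV ComplexField.Normc.normcM. Qed.

Lemma normc_Pintegrand_deriv_le z w :
  normc (Pintegrand_deriv z w) <=
  (normc (denA z w) + normc (denB z w)) / (normc (denA z w) * normc (denB z w)) ^+ 2.
Proof.
rewrite /Pintegrand_deriv ComplexField.Normc.normcM ComplexField.Normc.normcV.
rewrite !expr2 !ComplexField.Normc.normcM.
apply: ler_wpM2r; first by rewrite invr_ge0 !mulr_ge0 ?normc_ge0.
by apply: le_trans (le_normcD _ _) _; rewrite normcN addrC.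
Qed.

Lemma denA_neq0 r z w : well_inside r z -> denA z w != 0.
Proof. by move=> zr; apply: (normc_lb_neq0 (r := r)); [case: zr|exact: normc_denA_ge]. Qed.

Lemma denB_neq0 r z w : well_inside r z -> denB z w != 0.
Proof. by move=> zr; apply: (normc_lb_neq0 (r := r)); [case: zr|exact: normc_denB_ge]. Qed.

Lemma bounded_ccontinuous_Pintegrand r z : well_inside r z ->
  bounded_ccontinuous (Pintegrand beta sigma z).
Proof.
move=> zr; have [r0 _ _] := zr; split.
  apply: ccontinuousV; first exact: ccontinuousM (ccontinuous_denA z) (ccontinuous_denB z).
  by move=> w; rewrite mulf_neq0 ?(denA_neq0 _ zr) ?(denB_neq0 _ zr).
exists (r ^+ 2)^-1 => w; rewrite normc_Pintegrand.
by apply: invM_le_inv_sqr; [|exact: normc_denA_ge|exact: normc_denB_ge].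
Qed.

Lemma bounded_ccontinuous_Pintegrand_deriv r z : well_inside r z ->
  bounded_ccontinuous (Pintegrand_deriv z).
Proof.
move=> zr; have [r0 _ _] := zr.
have cAB := ccontinuousM (ccontinuous_denA z) (ccontinuous_denB z).
split.
  apply: ccontinuousM; first exact: ccontinuousB (ccontinuous_denB z) (ccontinuous_denA z).
  apply: ccontinuousV; first exact: (ccontinuousM cAB cAB).
  by move=> w; rewrite expf_neq0 // mulf_neq0 ?(denA_neq0 _ zr) ?(denB_neq0 _ zr).
exists (2 / r * (r ^+ 2)^-1) => w.
have hA := normc_denA_ge w zr; have hB := normc_denB_ge w zr.
apply: le_trans (normc_Pintegrand_deriv_le z w) _.
apply: le_trans (addr_div_sqrM_le r0 hA hB) _.
by apply: ler_wpM2l; [rewrite divr_ge0 // ltW|exact: invM_le_inv_sqr].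
Qed.

Lemma Pintegrand_remainderE r z h w : well_inside r z -> normc h <= r / 2 ->
  let A := denA z w in let B := denB z w in
  Pintegrand beta sigma (h + z) w - Pintegrand beta sigma z w - h * Pintegrand_deriv z w =
  h ^+ 2 * (A * B + (A - B) * (A - B - h)) / ((A * B) ^+ 2 * ((A - h) * (B + h))).
Proof.
move=> zr hr A B; have zhr := well_inside_shift zr hr.
have := denA_neq0 w zhr; have := denB_neq0 w zhr.
rewrite !PintegrandE /Pintegrand_deriv denA_shift denB_shift -/A -/B => nB' nA'.
have nA : A != 0 := denA_neq0 w zr; have nB : B != 0 := denB_neq0 w zr.
by field; rewrite nA nB nA' nB'.
Qed.

Lemma normc_Pintegrand_remainder_le r z h w : well_inside r z -> normc h <= r / 2 ->
  normc (Pintegrand beta sigma (h + z) w - Pintegrand beta sigma z w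
         - h * Pintegrand_deriv z w) <= normc h ^+ 2 * (24 / r ^+ 4).
Proof.
move=> zr hr; have zhr := well_inside_shift zr hr; have [r0 _ _] := zr.
rewrite (Pintegrand_remainderE w zr hr) /=.
have hA := normc_denA_ge w zr; have hB := normc_denB_ge w zr.
have := normc_denA_ge w zhr; have := normc_denB_ge w zhr.
rewrite denA_shift denB_shift; move: (denA z w) (denB z w) hA hB => A B hA hB hB' hA'.
apply: le_trans (remainder_ratio_le r0 hA hB hA' hB' (normc_ge0 h) hr).
have num : normc (A * B + (A - B) * (A - B - h)) <=
    normc A * normc B + (normc A + normc B) * (normc A + normc B + normc h).
  apply: le_trans (le_normcD _ _) _; rewrite !ComplexField.Normc.normcM lerD2l.
  have AB : normc (A - B) <= normc A + normc B by rewrite -(normcN B) le_normcD.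
  apply: ler_pM; rewrite ?normc_ge0 //.
  by apply: le_trans (le_normcD _ _) _; rewrite normcN lerD2r.
rewrite !ComplexField.Normc.normcM ComplexField.Normc.normcV !expr2.
rewrite !ComplexField.Normc.normcM -!expr2.
apply: ler_wpM2r; first by rewrite invr_ge0 mulr_ge0 ?sqr_ge0 // mulr_ge0 ?normc_ge0.
by apply: ler_wpM2l; rewrite ?sqr_ge0.
Qed.

Lemma norm1c_Pintegrand_le r z w : well_inside r z -> complex.Im z != 0 ->
  norm1c (Pintegrand beta sigma z w) + norm1c (Pintegrand_deriv z w)
  <= 2 * (1 + 2 / r) * (2 + 2 / r ^+ 2) / `|complex.Im z| ^+ 2 * (1 + w ^+ 2).
Proof.
move=> zr y0; have [r0 _ _] := zr.
have hA := normc_denA_ge w zr; have hB := normc_denB_ge w zr.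
have hA' := normc_denA_ge_Im z w; have hB' := normc_denB_ge_Im z w.
have hP := norm1c_le_normc (Pintegrand beta sigma z w); rewrite normc_Pintegrand in hP.
have hP' := le_trans (norm1c_le_normc _)
  (ler_wpM2l (ler0n _ 2) (normc_Pintegrand_deriv_le z w)).
move: hA hB hA' hB' hP hP'; set a := normc _; set b := normc _ => hA hB hA' hB' hP hP'.
have hP'' := ler_wpM2l (ler0n _ 2) (addr_div_sqrM_le r0 hA hB).
apply: le_trans (lerD hP (le_trans hP' hP'')) _.
rewrite real_normK ?num_real //.
have -> : 2 * (a * b)^-1 + 2 * (2 / r * (a * b)^-1) = 2 * (1 + 2 / r) * (a * b)^-1 by ring.
have -> : 2 * (1 + 2 / r) * (2 + 2 / r ^+ 2) / complex.Im z ^+ 2 * (1 + w ^+ 2) =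
    2 * (1 + 2 / r) * ((2 + 2 / r ^+ 2) * (1 + w ^+ 2) / complex.Im z ^+ 2) by ring.
apply: ler_wpM2l; first by rewrite mulr_ge0 // addr_ge0 // divr_ge0 // ltW.
exact: invM_le_weight.
Qed.

End Integrand.

Section Pstrip.
Variables (R : realType) (g : probability R R) (beta sigma : R).
Local Open Scope complex_scope.

Lemma PstripE z : Pstrip g beta sigma z = cintegral g (Pintegrand beta sigma z).
Proof. by []. Qed.

Lemma Pstrip_quotient_le r z h : well_inside beta sigma r z -> h != 0 -> normc h <= r / 2 ->
  normc (h^-1 * (Pstrip g beta sigma (h + z) - Pstrip g beta sigma z)
         - cintegral g (Pintegrand_deriv beta sigma z)) <= 48 / r ^+ 4 * normc h.
Proof.
move=> zr h0 hr; have zhr := well_inside_shift zr hr; have [r0 _ _] := zr.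
have bP := bounded_ccontinuous_Pintegrand zr.
have bP' := bounded_ccontinuous_Pintegrand_deriv zr.
have bPh := bounded_ccontinuous_Pintegrand zhr.
have bhP' := bounded_ccontinuousMl h bP'.
have h_gt0 : 0 < normc h.
  by rewrite lt_def normc_ge0 andbT; apply: contra h0 => /eqP/ComplexField.Normc.eq0_normc ->.
have -> : h^-1 * (Pstrip g beta sigma (h + z) - Pstrip g beta sigma z)
    - cintegral g (Pintegrand_deriv beta sigma z) =
    h^-1 * (cintegral g (Pintegrand beta sigma (h + z)) - cintegral g (Pintegrand beta sigma z)
            - h * cintegral g (Pintegrand_deriv beta sigma z)).
  by rewrite !PstripE; field.
rewrite -cintegralMl // -!cintegralB //; last exact: bounded_ccontinuousB.
rewrite ComplexField.Normc.normcM ComplexField.Normc.normcV.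
have bR := bounded_ccontinuousB (bounded_ccontinuousB bPh bP) bhP'.
have hR := normc_cintegral_le g bR (fun w => normc_Pintegrand_remainder_le w zr hr).
apply: le_trans (ler_wpM2l _ hR) _; first by rewrite invr_ge0 ltW.
suff -> : (normc h)^-1 * (2 * (normc h ^+ 2 * (24 / r ^+ 4))) = 48 / r ^+ 4 * normc h by [].
by field; rewrite !gt_eqF.
Qed.

Lemma Pstrip_derivE r z : well_inside beta sigma r z ->
  Pstrip_deriv g beta sigma z = cintegral g (Pintegrand_deriv beta sigma z).
Proof.
move=> zr; have [r0 _ _] := zr.
apply: (derive1_eq_of_quotient_bound (r := (r / 2)%:C) (c := (48 / r ^+ 4)%:C)).
- by rewrite ltcR divr_gt0.
- by rewrite ltcR divr_gt0 ?exprn_gt0.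
move=> h h0; rewrite !normC_normc lecR => hr.
by rewrite -rmorphM lecR; exact: Pstrip_quotient_le.
Qed.

Lemma normc_Pstrip_le r z : well_inside beta sigma r z ->
  ((normc (Pstrip g beta sigma z) + normc (Pstrip_deriv g beta sigma z))%:E <=
   \int[g]_w (norm1c (Pintegrand beta sigma z w)
              + norm1c (Pintegrand_deriv beta sigma z w))%:E)%E.
Proof.
move=> zr; have [cP _] := bounded_ccontinuous_Pintegrand zr.
have [cP' _] := bounded_ccontinuous_Pintegrand_deriv zr.
rewrite (Pstrip_derivE zr) PstripE EFinD.
under eq_integral do rewrite EFinD.
rewrite ge0_integralD //; last 4 first.
- by move=> w _; rewrite lee_fin norm1c_ge0.
- by apply/measurable_EFinP; exact: measurable_norm1c.
- by move=> w _; rewrite lee_fin norm1c_ge0.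
- by apply/measurable_EFinP; exact: measurable_norm1c.
by apply: leeD; apply: normc_cintegral_le_integral;
  [exact: bounded_ccontinuous_Pintegrand zr|exact: bounded_ccontinuous_Pintegrand_deriv zr].
Qed.

End Pstrip.

Unset Implicit Arguments.

Theorem lemma5p3 (R : realType) (beta sigma : R) :
  0 < beta -> 0 < sigma ->
  exists C : R, 0 < C /\
    forall (g : probability R R) (z : R[i]),
      0 <= complex.Re z <= beta -> complex.Im z != 0 ->
      ((ComplexField.Normc.normc (Pstrip g beta sigma z) + ComplexField.Normc.normc (Pstrip_deriv g beta sigma z))%:E
        <= (1 + \int[g]_w ((w ^+ 2)%:E))
           * (C / (`|complex.Im z| ^+ 2))%:E)%E.
Proof.
move=> _ sigma_gt0; pose s := sigma ^+ 2 / 2.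
have s_gt0 : 0 < s by rewrite divr_gt0 ?exprn_gt0.
exists (2 * (1 + 2 / s) * (2 + 2 / s ^+ 2)); split.
  by rewrite !mulr_gt0 // addr_gt0 // divr_gt0 // exprn_gt0.
move=> g z z_strip Imz_neq0; have zs := well_inside_strip sigma_gt0 z_strip.
have [cP _] := bounded_ccontinuous_Pintegrand zs.
have [cP' _] := bounded_ccontinuous_Pintegrand_deriv zs.
apply: le_trans (normc_Pstrip_le g zs) _; apply: integral_le_second_moment.
  by apply: measurable_funD; exact: measurable_norm1c.
by move=> w; rewrite addr_ge0 ?norm1c_ge0 //=; exact: norm1c_Pintegrand_le.
Qed.
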